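(* Let $\sqrt{2} = (1.b_1 b_2 b_3 \cdots)_2$ be the binary expansion of $\sqrt 2$. For integers $n \geq 2$, let $L_n(x) = \left\lfloor \frac{x(2^n - x)}{2^{n-2}} \right\rfloor$ for $x \in X_n = \{1, 2, \dots, 2^n - 1\}$, and call $n$ undesirable if there exists $x \in X_n$ with $L_n(x) = 2^{n-1}$. Then an integer $n \geq 2$ is undesirable if $b_{n-1} b_n = 00$, or $b_{n-1} b_n b_{n+1} b_{n+2} = 0100$, or $b_{n-1} b_n b_{n+1} b_{n+2} b_{n+3} = 01010$. *)

From Stdlib Require Import Reals Arith ZArith Lia.
Open Scope R_scope.

(* k-th binary digit after the point of sqrt 2 (k >= 1):
   sqrt 2 = (1.b_1 b_2 b_3 ...)_2, so b_k = floor(2^k * sqrt 2) mod 2.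
   Int_part is the floor for the (nonnegative) argument used here. *)
Definition sqrt2_bit (k : nat) : nat :=
  if Z.odd (Int_part (2 ^ k * sqrt 2)) then 1%nat else 0%nat.

Close Scope R_scope.

Definition L (n x : nat) : nat := (x * (2 ^ n - x)) / 2 ^ (n - 2).

Definition undesirable (n : nat) : Prop :=
  exists x : nat, 1 <= x <= 2 ^ n - 1 /\ L n x = 2 ^ (n - 1).

(** Write [a_k = floor (2^k sqrt 2)], so that [a_(k+1) = 2 a_k + b_(k+1)]. Each of
    the three digit patterns pins [a_(m+j)] down to [2^j a_m + c] with
    [(c + 1) / 2^j <= 11/32], hence [2^m sqrt 2 < a_m + 11/32] for [n = m + 2].
    With [P = 2^m] and [a = a_m] this gives [a^2 <= 2 P^2 < a^2 + P], since
    [2 P^2 - a^2 = (P sqrt 2 - a)(P sqrt 2 + a) < (11/16) sqrt 2 P < P].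
    Then [x = 2P - a] satisfies [x (4P - x) = 4P^2 - a^2 = 2P * P + (2P^2 - a^2)],
    so [L_n(x) = 2P = 2^(n-1)]. *)

From Stdlib Require Import Reals ZArith Lia Lra Psatz.

Lemma div_of_sqr_bounds (a P : nat) :
  0 < P -> a * a <= 2 * (P * P) < a * a + P ->
  ((2 * P - a) * (4 * P - (2 * P - a))) / P = 2 * P.
Proof.
  intros HP [Hlo Hhi].
  assert (Ha : a < 2 * P) by nia.
  symmetry; apply (Nat.div_unique _ _ _ (2 * (P * P) - a * a)); [lia |].
  replace (4 * P - (2 * P - a)) with (2 * P + a) by lia.
  assert (Hprod : (2 * P - a) * (2 * P + a) + a * a = 4 * (P * P)).
  { replace (2 * P) with ((2 * P - a) + a) at 2 by lia; nia. }
  lia.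
Qed.

Lemma undesirable_of_sqr_bounds (m a : nat) :
  a * a <= 2 * (2 ^ m * 2 ^ m) < a * a + 2 ^ m -> undesirable (2 + m).
Proof.
  intros Hsq.
  assert (HP : 0 < 2 ^ m) by (apply Nat.neq_0_lt_0, Nat.pow_nonzero; lia).
  exists (2 * 2 ^ m - a); unfold L.
  replace (2 ^ (2 + m)) with (4 * 2 ^ m) by (rewrite Nat.pow_add_r; reflexivity).
  replace (2 + m - 1) with (S m) by lia.
  replace (2 + m - 2) with m by lia.
  rewrite div_of_sqr_bounds by assumption.
  split; [nia | reflexivity].
Qed.

Open Scope R_scope.

Definition sqrt2_floor (k : nat) : Z := Int_part (2 ^ k * sqrt 2).

Lemma sqrt2_floor_bounds (k : nat) :
  IZR (sqrt2_floor k) <= 2 ^ k * sqrt 2 < IZR (sqrt2_floor k) + 1.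
Proof. unfold sqrt2_floor; destruct (base_Int_part (2 ^ k * sqrt 2)); lra. Qed.

Lemma sqrt2_floor_nonneg (k : nat) : (0 <= sqrt2_floor k)%Z.
Proof.
  destruct (sqrt2_floor_bounds k) as [_ Hhi].
  assert (Hpos : 0 <= 2 ^ k * sqrt 2)
    by (apply Rmult_le_pos; [apply pow_le; lra | apply sqrt_pos]).
  assert (Hgt : IZR (-1) < IZR (sqrt2_floor k)) by lra.
  apply lt_IZR in Hgt; lia.
Qed.

Lemma sqrt2_floor_S (k : nat) :
  sqrt2_floor (S k) = (2 * sqrt2_floor k + Z.of_nat (sqrt2_bit (S k)))%Z.
Proof.
  destruct (sqrt2_floor_bounds k) as [Hlo Hhi].
  destruct (sqrt2_floor_bounds (S k)) as [HloS HhiS].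
  simpl pow in HloS, HhiS.
  assert (Hlt : IZR (sqrt2_floor (S k)) < IZR (2 * sqrt2_floor k + 2))
    by (rewrite plus_IZR, mult_IZR; lra).
  assert (Hgt : IZR (2 * sqrt2_floor k) < IZR (sqrt2_floor (S k) + 1))
    by (rewrite plus_IZR, mult_IZR; lra).
  apply lt_IZR in Hlt; apply lt_IZR in Hgt.
  change (sqrt2_bit (S k)) with
    (if Z.odd (sqrt2_floor (S k)) then 1%nat else 0%nat).
  assert (Hcases : sqrt2_floor (S k) = (2 * sqrt2_floor k)%Z \/
                   sqrt2_floor (S k) = (2 * sqrt2_floor k + 1)%Z) by lia.
  destruct Hcases as [-> | ->].
  - rewrite Z.odd_mul; simpl; lia.
  - rewrite Z.odd_add, Z.odd_mul; simpl; lia.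
Qed.

Lemma sqrt2_frac_lt_of_floor (j k : nat) (c : Z) :
  sqrt2_floor (j + k) = (2 ^ Z.of_nat j * sqrt2_floor k + c)%Z ->
  2 ^ k * sqrt 2 < IZR (sqrt2_floor k) + (IZR c + 1) / 2 ^ j.
Proof.
  intros Hjk.
  destruct (sqrt2_floor_bounds (j + k)) as [_ Hhi].
  rewrite Hjk, plus_IZR, mult_IZR, <- pow_IZR, pow_add in Hhi.
  assert (Hj : 0 < 2 ^ j) by (apply pow_lt; lra).
  apply (Rmult_lt_reg_l (2 ^ j)); [exact Hj |].
  rewrite Rmult_plus_distr_l.
  replace (2 ^ j * ((IZR c + 1) / 2 ^ j)) with (IZR c + 1) by (field; lra).
  lra.
Qed.

Lemma sqrt2_lt_16_11 : sqrt 2 < 16 / 11.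
Proof.
  apply Rsqr_incrst_0; unfold Rsqr; try lra.
  - rewrite sqrt_sqrt; lra.
  - apply sqrt_pos.
Qed.

Lemma sqr_bounds_of_near_sqrt2_multiple (A P : R) :
  0 <= A -> 0 < P -> A <= P * sqrt 2 < A + 11 / 32 ->
  A * A <= 2 * (P * P) < A * A + P.
Proof.
  intros HA HP [Hlo Hhi].
  pose proof sqrt2_lt_16_11 as Hs.
  pose proof (sqrt_pos 2) as Hs0.
  assert (Hsq : (P * sqrt 2) * (P * sqrt 2) = 2 * (P * P)).
  { replace ((P * sqrt 2) * (P * sqrt 2)) with (P * P * (sqrt 2 * sqrt 2)) by ring.
    rewrite sqrt_sqrt; lra. }
  rewrite <- Hsq; split.
  - apply Rmult_le_compat; lra.
  -     assert (Hdiff : (P * sqrt 2 - A) * (P * sqrt 2 + A) <= 11 / 32 * (2 * (P * sqrt 2)))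
      by (apply Rmult_le_compat; nra).
    nra.
Qed.

Close Scope R_scope.

Lemma sqrt2_frac_lt_11_32 (m : nat) :
  (sqrt2_bit (S m) = 0 /\ sqrt2_bit (2 + m) = 0) \/
  (sqrt2_bit (S m) = 0 /\ sqrt2_bit (2 + m) = 1 /\ sqrt2_bit (3 + m) = 0 /\
   sqrt2_bit (4 + m) = 0) \/
  (sqrt2_bit (S m) = 0 /\ sqrt2_bit (2 + m) = 1 /\ sqrt2_bit (3 + m) = 0 /\
   sqrt2_bit (4 + m) = 1 /\ sqrt2_bit (5 + m) = 0) ->
  (2 ^ m * sqrt 2 < IZR (sqrt2_floor m) + 11 / 32)%R.
Proof.
  intros Hbits.
  pose proof sqrt2_floor_S as Hrec; cbn [Nat.add] in *.
  destruct Hbits as [[b1 b2] | [[b1 [b2 [b3 b4]]] | [b1 [b2 [b3 [b4 b5]]]]]].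
  - assert (Hf : sqrt2_floor (2 + m) = (4 * sqrt2_floor m + 0)%Z)
      by (cbn [Nat.add]; rewrite !Hrec, b1, b2; lia).
    pose proof (sqrt2_frac_lt_of_floor 2 m 0 Hf); lra.
  - assert (Hf : sqrt2_floor (4 + m) = (16 * sqrt2_floor m + 4)%Z)
      by (cbn [Nat.add]; rewrite !Hrec, b1, b2, b3, b4; lia).
    pose proof (sqrt2_frac_lt_of_floor 4 m 4 Hf); lra.
  - assert (Hf : sqrt2_floor (5 + m) = (32 * sqrt2_floor m + 10)%Z)
      by (cbn [Nat.add]; rewrite !Hrec, b1, b2, b3, b4, b5; lia).
    pose proof (sqrt2_frac_lt_of_floor 5 m 10 Hf); lra.
Qed.

Lemma undesirable_of_near_sqrt2_multiple (m a : nat) :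
  (INR a <= 2 ^ m * sqrt 2 < INR a + 11 / 32)%R -> undesirable (2 + m).
Proof.
  intros Hnear.
  assert (HP : INR (2 ^ m) = (2 ^ m)%R) by (rewrite pow_INR; f_equal; simpl; ring).
  destruct (sqr_bounds_of_near_sqrt2_multiple (INR a) (INR (2 ^ m))) as [Hsq1 Hsq2].
  - apply pos_INR.
  - rewrite HP; apply pow_lt; lra.
  - rewrite HP; exact Hnear.
  - apply (undesirable_of_sqr_bounds m a).
    replace 2%R with (INR 2) in Hsq1, Hsq2 by (simpl; ring).
    rewrite <- !mult_INR in Hsq1, Hsq2; rewrite <- plus_INR in Hsq2.
    split; [apply INR_le | apply INR_lt]; assumption.
Qed.

Theorem proposition2p4 (n : nat) (hn : 2 <= n) :
  (sqrt2_bit (n - 1) = 0 /\ sqrt2_bit n = 0) \/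
  (sqrt2_bit (n - 1) = 0 /\ sqrt2_bit n = 1 /\ sqrt2_bit (n + 1) = 0 /\
   sqrt2_bit (n + 2) = 0) \/
  (sqrt2_bit (n - 1) = 0 /\ sqrt2_bit n = 1 /\ sqrt2_bit (n + 1) = 0 /\
   sqrt2_bit (n + 2) = 1 /\ sqrt2_bit (n + 3) = 0) ->
  undesirable n.
Proof.
  intros Hbits.
  destruct n as [| [| m]]; [lia | lia |].
  replace (S (S m) - 1) with (S m) in Hbits by lia.
  replace (S (S m) + 1) with (3 + m) in Hbits by lia.
  replace (S (S m) + 2) with (4 + m) in Hbits by lia.
  replace (S (S m) + 3) with (5 + m) in Hbits by lia.
  apply (undesirable_of_near_sqrt2_multiple m (Z.to_nat (sqrt2_floor m))).
  rewrite INR_IZR_INZ, Z2Nat.id by apply sqrt2_floor_nonneg.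
  split.
  - apply sqrt2_floor_bounds.
  - apply sqrt2_frac_lt_11_32; exact Hbits.
Qed.
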